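(* Let $V$ be a real vector space and $C$ a convex cone in $V$ with $0\in C$. Suppose $X$ and $Y$ are disjoint $C$-antichain-convex subsets of $V$. (1) If $X$ is $C$-upward, then $\operatorname{co}(X)\cap\operatorname{co}(Y)=\emptyset$. (2) If $X$ is $C$-downward, then $\operatorname{co}(X)\cap\operatorname{co}(Y)=\emptyset$.
   Context: A cone in $V$ is a subset $C$ with $\lambda C\subseteq C$ for all $\lambda>0$. $S\subseteq V$ is $C$-antichain-convex iff for all $x,y\in S$ and $\lambda\in[0,1]$ with $y-x\notin C\cup(-C)$ one has $\lambda x+(1-\lambda)y\in S$. $S$ is $C$-upward iff $S+C\subseteq S$; $C$-downward iff $S-C\subseteq S$. $\operatorname{co}$ denotes convex hull. *)

From HB Require Import structures.
From mathcomp Require Import all_boot all_order all_algebra.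
From mathcomp Require Import reals.
Set Implicit Arguments. Unset Strict Implicit. Unset Printing Implicit Defensive.
Import Order.TTheory GRing.Theory Num.Theory.
Local Open Scope ring_scope.

Section Defs.
Variables (R : realType) (V : lmodType R).

Definition is_cone (C : V -> Prop) : Prop :=
  forall (l : R) (x : V), 0 < l -> C x -> C (l *: x).

Definition is_convex (S : V -> Prop) : Prop :=
  forall (x y : V) (l : R), S x -> S y -> 0 <= l -> l <= 1 ->
    S (l *: x + (1 - l) *: y).

Definition antichain_convex (C S : V -> Prop) : Prop :=
  forall (x y : V) (l : R), S x -> S y -> 0 <= l -> l <= 1 ->
    ~ (C (y - x) \/ C (- (y - x))) ->
    S (l *: x + (1 - l) *: y).

Definition upward (C S : V -> Prop) : Prop :=
  forall x c : V, S x -> C c -> S (x + c).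

Definition downward (C S : V -> Prop) : Prop :=
  forall x c : V, S x -> C c -> S (x - c).

Definition conv_hull (S : V -> Prop) : V -> Prop :=
  fun v => exists (n : nat) (w : 'I_n -> R) (p : 'I_n -> V),
    (forall i, 0 <= w i) /\ (\sum_(i < n) w i = 1) /\ (forall i, S (p i)) /\
    v = \sum_(i < n) w i *: p i.

End Defs.

From HB Require Import structures.
From mathcomp Require Import all_boot all_order all_algebra.
From mathcomp Require Import reals.
From Stdlib Require Import Classical.
Set Implicit Arguments. Unset Strict Implicit. Unset Printing Implicit Defensive.
Import Order.TTheory GRing.Theory Num.Theory.
Local Open Scope ring_scope.

(* Write u <= v for v - u \in C.  If S is C-antichain-convex, every point of
   co(S) lies below a point of S: when merging two weighted points of S, either
   they are comparable and the larger one dominates the merged mass, or they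
   are incomparable and their barycentre is again in S.  Applied to the
   opposite cone -C, the same argument puts every point of co(S) above a point
   of S.  So a common point v of co(X) and co(Y) gives x <= v <= y with
   x \in X, y \in Y (resp. y <= v <= x), and then y = x + (y - x)
   (resp. y = x - (x - y)) lies in X when X is upward (resp. downward),
   contradicting disjointness. *)

Section ConvexCone.
Variables (R : realType) (V : lmodType R) (C : V -> Prop).
Hypotheses (coneC : is_cone C) (convexC : is_convex C) (C0 : C 0).

Lemma cone_scale (l : R) (x : V) : 0 <= l -> C x -> C (l *: x).
Proof.
rewrite le0r => /orP[/eqP->|l_gt0] Cx; first by rewrite scale0r.
exact: coneC.
Qed.

Lemma cone_add (a b : V) : C a -> C b -> C (a + b).
Proof.
move=> Ca Cb; have half_ge0 : 0 <= (2 : R)^-1 by rewrite invr_ge0.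
have half_le1 : (2 : R)^-1 <= 1 by rewrite invf_le1 // ler1n.
have := convexC Ca Cb half_ge0 half_le1.
have -> : 1 - (2 : R)^-1 = 2^-1 by rewrite {1}(splitr 1) mul1r addrK.
rewrite -scalerDr => /(coneC (ltr0Sn R 1)).
by rewrite scalerA divff ?pnatr_eq0 // scale1r.
Qed.

Section AntichainConvex.
Variable S : V -> Prop.
Hypothesis acS : antichain_convex C S.

Lemma antichain_convex_merge (a b : R) (x z : V) :
  0 <= a -> 0 <= b -> S x -> S z ->
  exists2 y, S y & C ((a + b) *: y - (a *: x + b *: z)).
Proof.
move=> a_ge0 b_ge0 Sx Sz.
have [Czx|nCzx] := classic (C (z - x)).
  exists z => //; suff -> : (a + b) *: z - (a *: x + b *: z) = a *: (z - x).
    exact: cone_scale.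
  by rewrite scalerBr scalerDl opprD addrACA subrr addr0.
have [Cxz|nCxz] := classic (C (- (z - x))).
  exists x => //; suff -> : (a + b) *: x - (a *: x + b *: z) = b *: - (z - x).
    exact: cone_scale.
  by rewrite scalerN scalerBr opprB scalerDl opprD addrACA subrr add0r addrC.
have [ab0|ab_neq0] := eqVneq (a + b) 0.
  have /andP[/eqP a0 /eqP b0] : (a == 0) && (b == 0).
    by rewrite -paddr_eq0 // ab0.
  by exists x => //; rewrite ab0 a0 b0 !scale0r addr0 subrr.
pose l := a / (a + b).
have ab_gt0 : 0 < a + b by rewrite lt0r ab_neq0 addr_ge0.
have l_ge0 : 0 <= l by rewrite divr_ge0 // ltW.
have l_le1 : l <= 1 by rewrite ler_pdivrMr // mul1r lerDl.
exists (l *: x + (1 - l) *: z); first by apply: acS => // -[].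
have abl : (a + b) * l = a by rewrite mulrC divfK.
have abl' : (a + b) * (1 - l) = b by rewrite mulrBr mulr1 abl addrAC subrr add0r.
by rewrite scalerDr !scalerA abl abl' subrr.
Qed.

Lemma antichain_convex_weighted_sum (x0 : V) : S x0 ->
  forall n (w : 'I_n -> R) (p : 'I_n -> V),
  (forall i, 0 <= w i) -> (forall i, S (p i)) ->
  exists2 y, S y & C ((\sum_(i < n) w i) *: y - \sum_(i < n) w i *: p i).
Proof.
move=> Sx0; elim=> [|n IHn] w p w_ge0 Sp.
  by exists x0 => //; rewrite !big_ord0 scale0r subrr.
have [y' Sy' Cy'] := IHn _ _ (fun i => w_ge0 (lift ord0 i)) (fun i => Sp (lift ord0 i)).
set r := \sum_(i < n) _ in Cy'; set u := \sum_(i < n) _ in Cy'.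
have r_ge0 : 0 <= r by apply: sumr_ge0.
have [y Sy Cy] := antichain_convex_merge (w_ge0 ord0) r_ge0 (Sp ord0) Sy'.
exists y => //; rewrite !big_ord_recl -/r -/u.
have -> : (w ord0 + r) *: y - (w ord0 *: p ord0 + u)
        = ((w ord0 + r) *: y - (w ord0 *: p ord0 + r *: y')) + (r *: y' - u).
  by rewrite !opprD !addrA subrK.
exact: cone_add.
Qed.

Lemma conv_hull_below (v : V) : conv_hull S v -> exists2 y, S y & C (y - v).
Proof.
move=> [[|n] [w [p [w_ge0 [w_sum1 [Sp ->]]]]]].
  by move: w_sum1; rewrite big_ord0 => /eqP; rewrite eq_sym oner_eq0.
have [y Sy] := antichain_convex_weighted_sum (Sp ord0) w_ge0 Sp.
by rewrite w_sum1 scale1r; exists y.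
Qed.

End AntichainConvex.

End ConvexCone.

Section OppositeCone.
Variables (R : realType) (V : lmodType R) (C : V -> Prop).

Definition oppC : V -> Prop := fun z => C (- z).

Lemma is_cone_opp : is_cone C -> is_cone oppC.
Proof. by move=> coneC l x l_gt0 Cx; rewrite /oppC -scalerN; apply: coneC. Qed.

Lemma is_convex_opp : is_convex C -> is_convex oppC.
Proof. by move=> convexC x y l Cx Cy *; rewrite /oppC opprD -!scalerN; apply: convexC. Qed.

Lemma antichain_convex_opp (S : V -> Prop) :
  antichain_convex C S -> antichain_convex oppC S.
Proof.
move=> acS x y l Sx Sy l_ge0 l_le1 incomparable; apply: acS => // -[Cyx|Cxy].
  by apply: incomparable; right; rewrite /oppC opprK.
by apply: incomparable; left.
Qed.

End OppositeCone.

Lemma conv_hull_above (R : realType) (V : lmodType R) (C S : V -> Prop) (v : V) :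
  is_cone C -> is_convex C -> C 0 ->
  antichain_convex C S -> conv_hull S v -> exists2 y, S y & C (v - y).
Proof.
move=> coneC convexC C0 acS hull_v.
have C'0 : oppC C 0 by rewrite /oppC oppr0.
have [y Sy] := conv_hull_below (is_cone_opp coneC) (is_convex_opp convexC) C'0
  (antichain_convex_opp acS) hull_v.
by rewrite /oppC opprB; exists y.
Qed.

Theorem lemma7 (R : realType) (V : lmodType R) (C X Y : V -> Prop) :
  is_cone C -> is_convex C -> C 0 ->
  (forall v, ~ (X v /\ Y v)) ->
  antichain_convex C X -> antichain_convex C Y ->
  (upward C X -> forall v, ~ (conv_hull X v /\ conv_hull Y v)) /\
  (downward C X -> forall v, ~ (conv_hull X v /\ conv_hull Y v)).
Proof.
move=> coneC convexC C0 disjXY acX acY; split=> [upX|downX] v [hullX hullY].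
- have [x Xx Cvx] := conv_hull_above coneC convexC C0 acX hullX.
  have [y Yy Cyv] := conv_hull_below coneC convexC C0 acY hullY.
  apply: (disjXY y); split => //.
  have := upX _ _ Xx (cone_add coneC convexC Cyv Cvx).
  by rewrite subrKA addrC subrK.
- have [x Xx Cxv] := conv_hull_below coneC convexC C0 acX hullX.
  have [y Yy Cvy] := conv_hull_above coneC convexC C0 acY hullY.
  apply: (disjXY y); split => //.
  have := downX _ _ Xx (cone_add coneC convexC Cxv Cvy).
  by rewrite subrKA opprB addrC subrK.
Qed.
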